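(* Let $\operatorname{dist}$ be a distance function and let $(X,k,D)$ be a yes-instance of \textsc{$k$-Clustering} with distance $\operatorname{dist}$. Then there exists a solution of $(X,k,D)$ whose clustering is regular.
   Context: \textsc{$k$-Clustering} with distance $\operatorname{dist}$ (a function assigning a nonnegative real to each pair of a vector in $\mathbb{Z}^d$ and a vector in $\mathbb{R}^d$): given a multiset $X$ of $n$ vectors in $\mathbb{Z}^d$, a positive integer $k$ and a nonnegative number $D$, decide whether there is a partition of $X$ into $k$ clusters $C_1,\dots,C_k$ and vectors $c_1,\dots,c_k\in\mathbb{R}^d$ with $\sum_{i=1}^k\sum_{x\in C_i}\operatorname{dist}(x,c_i)\le D$; such clusters and centroids form a solution. An initial cluster of a multiset $X$ is an inclusion-wise maximal sub-multiset $I\subseteq X$ all of whose vectors are equal. A clustering $\{C_1,\dots,C_k\}$ of $X$ is regular if for every initial cluster $I$ there is $i\in\{1,\dots,k\}$ with $I\subseteq C_i$. *)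

From HB Require Import structures.
From mathcomp Require Import all_boot all_order all_algebra.
From mathcomp Require Import reals.
Set Implicit Arguments. Unset Strict Implicit. Unset Printing Implicit Defensive.
Import Order.TTheory GRing.Theory Num.Theory.
Local Open Scope ring_scope.

(* A multiset X of n vectors of Z^d is an indexed family X : 'I_n -> 'rV[int]_d.
   A clustering of X into k (possibly empty) clusters C_1..C_k is an
   assignment f : 'I_n -> 'I_k (C_i = {x_j | f j = i}); centroids are
   c : 'I_k -> 'rV[R]_d.  dist : 'rV[int]_d -> 'rV[R]_d -> R. *)

Definition clustering_cost (R : realType) (d n k : nat)
  (dist : 'rV[int]_d -> 'rV[R]_d -> R) (X : 'I_n -> 'rV[int]_d)
  (f : 'I_n -> 'I_k) (c : 'I_k -> 'rV[R]_d) : R :=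
  \sum_(j < n) dist (X j) (c (f j)).

Definition is_solution (R : realType) (d n k : nat)
  (dist : 'rV[int]_d -> 'rV[R]_d -> R) (X : 'I_n -> 'rV[int]_d) (D : R)
  (f : 'I_n -> 'I_k) (c : 'I_k -> 'rV[R]_d) : Prop :=
  clustering_cost dist X f c <= D.

Definition yes_instance (R : realType) (d n k : nat)
  (dist : 'rV[int]_d -> 'rV[R]_d -> R) (X : 'I_n -> 'rV[int]_d) (D : R) : Prop :=
  exists (f : 'I_n -> 'I_k) (c : 'I_k -> 'rV[R]_d), is_solution dist X D f c.

Definition initial_cluster (d n : nat) (X : 'I_n -> 'rV[int]_d) (j : 'I_n)
  : {set 'I_n} := [set j' | X j' == X j].

Definition regular (d n k : nat) (X : 'I_n -> 'rV[int]_d) (f : 'I_n -> 'I_k)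
  : Prop :=
  forall j : 'I_n, exists i : 'I_k,
    forall j' : 'I_n, j' \in initial_cluster X j -> f j' = i.

(* Reassigning every point to a nearest centroid never increases the cost, and
   the new cluster of a point depends only on its value, so equal points end up
   in the same cluster. *)
From HB Require Import structures.
From mathcomp Require Import all_boot all_order all_algebra.
From mathcomp Require Import reals.
Set Implicit Arguments. Unset Strict Implicit. Unset Printing Implicit Defensive.
Import Order.TTheory GRing.Theory Num.Theory.
Local Open Scope ring_scope.

Lemma regular_comp (d n k : nat) (X : 'I_n -> 'rV[int]_d)
  (g : 'rV[int]_d -> 'I_k) : regular X (fun j => g (X j)).
Proof. by move=> j; exists (g (X j)) => j'; rewrite inE => /eqP ->. Qed.

Section NearestCenter.
Variables (R : realType) (d k : nat) (k_gt0 : (0 < k)%N).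
Variables (dist : 'rV[int]_d -> 'rV[R]_d -> R) (c : 'I_k -> 'rV[R]_d).

Definition nearest_center (v : 'rV[int]_d) : 'I_k :=
  Order.arg_min (Ordinal k_gt0) xpredT (fun i => dist v (c i)).

Lemma nearest_centerP (v : 'rV[int]_d) (i : 'I_k) :
  dist v (c (nearest_center v)) <= dist v (c i).
Proof. by rewrite /nearest_center; case: arg_minP => // i0 _; apply. Qed.

Lemma clustering_cost_nearest_le (n : nat) (X : 'I_n -> 'rV[int]_d)
  (f : 'I_n -> 'I_k) :
  clustering_cost dist X (fun j => nearest_center (X j)) c
    <= clustering_cost dist X f c.
Proof. by apply: ler_sum => j _; apply: nearest_centerP. Qed.

End NearestCenter.

Theorem proposition1 (R : realType) (d n k : nat)
  (dist : 'rV[int]_d -> 'rV[R]_d -> R)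
  (dist_ge0 : forall x c, 0 <= dist x c)
  (X : 'I_n -> 'rV[int]_d) (D : R)
  (k_gt0 : (0 < k)%N) (D_ge0 : 0 <= D) :
  yes_instance k dist X D ->
  exists (f : 'I_n -> 'I_k) (c : 'I_k -> 'rV[R]_d),
    is_solution dist X D f c /\ regular X f.
Proof.
move=> [f [c f_sol]].
exists (fun j => nearest_center k_gt0 dist c (X j)), c; split.
- exact: le_trans (clustering_cost_nearest_le k_gt0 dist c X f) f_sol.
- exact: regular_comp.
Qed.
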